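(* Let $k$ be an algebraically closed field of characteristic $0$, $R=k[x,y]$, and let $L=(x^d,x^{d-1}y^{a_1},\dots,xy^{a_{d-1}},y^{a_d})$ with $0=a_0<a_1<\dots<a_d$ be a lex-segment ideal. If $L^2=(x^d,x^{d-i}y^{a_i},y^{a_d})L$ for some $i\in\{0,\dots,d\}$, then $\operatorname{depth}\operatorname{gr}_L(R)>0$.
   Context: $\operatorname{gr}_L(R)=\bigoplus_{n\ge0}L^n/L^{n+1}$. *)

From HB Require Import structures.
From mathcomp Require Import all_boot all_order all_algebra.
From mathcomp Require Export mpoly.
Set Implicit Arguments. Unset Strict Implicit. Unset Printing Implicit Defensive.
Import GRing.Theory.
Local Open Scope ring_scope.

Definition in_prod (R : comNzRingType) (I : R -> Prop) (gs : seq R) (p : R) : Prop :=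
  exists hs : seq R, size hs = size gs /\
    (forall j, (j < size gs)%N -> I (nth 0 hs j)) /\
    p = \sum_(j < size gs) nth 0 hs j * nth 0 gs j.

Fixpoint in_pow (R : comNzRingType) (gs : seq R) (n : nat) : R -> Prop :=
  match n with
  | 0 => fun _ => True
  | n'.+1 => in_prod (in_pow gs n') gs
  end.

Definition in_ideal (R : comNzRingType) (gs : seq R) (p : R) : Prop := in_pow gs 1 p.

(* The associated graded ring gr_L(R) = ⊕_{n>=0} L^n/L^{n+1}, L = (gs).
   An element is given by a finite list f of representatives, f_n ∈ L^n
   representing the class of degree n (components beyond size f are 0). *)
Definition gr_elt (R : comNzRingType) (gs : seq R) (f : seq R) : Prop :=
  forall n, in_pow gs n (nth 0 f n).

Definition gr_zero (R : comNzRingType) (gs : seq R) (f : seq R) : Prop :=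
  forall n, in_pow gs n.+1 (nth 0 f n).

Definition gr_mul (R : comNzRingType) (f g : seq R) : seq R :=
  mkseq (fun m => \sum_(j < m.+1) nth 0 f j * nth 0 g (m - j)) (size f + size g).

(* f lies in the homogeneous maximal ideal M = m/L ⊕ gr_+ , where m is the
   ideal generated by ms (for k[x,y]: m = (x,y)). *)
Definition gr_in_max (R : comNzRingType) (ms gs : seq R) (f : seq R) : Prop :=
  in_ideal (ms ++ gs) (nth 0 f 0).

Definition gr_depth_pos (R : comNzRingType) (ms gs : seq R) : Prop :=
  exists f, gr_elt gs f /\ gr_in_max ms gs f /\
    forall g, gr_elt gs g -> gr_zero gs (gr_mul f g) -> gr_zero gs g.

Definition xv (k : comNzRingType) : {mpoly k[2]} := 'X_(ord0 : 'I_2).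
Definition yv (k : comNzRingType) : {mpoly k[2]} := 'X_(ord_max : 'I_2).

Definition lexgens (k : comNzRingType) (d : nat) (a : nat -> nat) : seq {mpoly k[2]} :=
  [seq xv k ^+ (d - j) * yv k ^+ a j | j <- iota 0 d.+1].

From mathcomp Require Import all_boot all_order all_algebra.
From mathcomp Require Import mpoly zify.
Import GRing.Theory.
Set Implicit Arguments. Unset Strict Implicit. Unset Printing Implicit Defensive.

(* The class of f = x^d + y^(a_d) in L/L^2 is a nonzerodivisor of gr_L(R):
   f g ∈ L^(n+2) forces g ∈ L^(n+1).  As L is monomial, this is a statement
   about supports.  If some monomial of g lies outside L^(n+1), pick such
   monomials u and v of maximal x-degree and of maximal y-degree; maximality
   rules out cancellation, so x^d u and y^(a_d) v lie in L^(n+2).  Read on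
   exponents, L^2 = J L with J = (x^d, x^(d-i) y^(a_i), y^(a_d)) gives
   L^(n+2) = J^(n+1) L, so x^d u is divisible by
   x^(αd) (x^(d-i) y^(a_i))^β y^(γ a_d) times a generator of L, α+β+γ = n+1.
   As u ∉ L^(n+1), α = 0, u_x < β(d-i) and β a_i <= u_y.  Symmetrically v
   yields β' with β'(d-i) <= v_x and v_y < β' a_i.  Since v_x <= u_x and
   u_y <= v_y, both β' < β and β a_i < β' a_i, which is absurd. *)

Section IdealPowers.
Variable R : comNzRingType.
Local Open Scope ring_scope.
Implicit Types (I : R -> Prop) (gs : seq R).

Definition ideal_closed I :=
  [/\ I 0, forall p q, I p -> I q -> I (p + q) & forall r p, I p -> I (r * p)].

Lemma in_prod_closed I gs : ideal_closed I -> ideal_closed (in_prod I gs).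
Proof.
move=> [I0 ID IM]; split.
- exists (nseq (size gs) 0); rewrite size_nseq; split=> //; split.
    by move=> j lt_j; rewrite nth_nseq lt_j.
  by rewrite big1 // => j _; rewrite nth_nseq ltn_ord mul0r.
- move=> _ _ [hs [hs_sz [Ihs ->]]] [hs' [hs'_sz [Ihs' ->]]].
  exists [seq hs`_j + hs'`_j | j <- iota 0 (size gs)].
  rewrite size_map size_iota; split=> //; split.
    move=> j lt_j; rewrite (nth_map 0%N) ?size_iota // nth_iota //.
    by apply: ID; [apply: Ihs | apply: Ihs'].
  rewrite -big_split; apply: eq_bigr => j _ /=.
  by rewrite (nth_map 0%N) ?size_iota // nth_iota // mulrDl.
- move=> r _ [hs [hs_sz [Ihs ->]]].
  exists [seq r * h | h <- hs]; rewrite size_map; split=> //; split.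
    by move=> j lt_j; rewrite (nth_map 0) ?hs_sz //; apply/IM/Ihs.
  by rewrite mulr_sumr; apply: eq_bigr => j _; rewrite (nth_map 0) ?hs_sz // mulrA.
Qed.

Lemma in_pow_closed gs n : ideal_closed (in_pow gs n).
Proof. by elim: n => [|n IHn] //=; apply: in_prod_closed. Qed.

Lemma in_pow0 gs n : in_pow gs n 0.
Proof. by case: (in_pow_closed gs n). Qed.

Lemma in_powD gs n p q : in_pow gs n p -> in_pow gs n q -> in_pow gs n (p + q).
Proof. by case: (in_pow_closed gs n) => _ + _; apply. Qed.

Lemma in_powMl gs n r p : in_pow gs n p -> in_pow gs n (r * p).
Proof. by case: (in_pow_closed gs n) => _ _; apply. Qed.

Lemma in_prod_nth I gs h j :
  ideal_closed I -> I h -> (j < size gs)%N -> in_prod I gs (h * gs`_j).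
Proof.
move=> [I0 _ _] Ih lt_j.
exists [seq if l == j then h else 0 | l <- iota 0 (size gs)].
have nthE l : (l < size gs)%N ->
    [seq if l == j then h else 0 | l <- iota 0 (size gs)]`_l = if l == j then h else 0.
  by move=> lt_l; rewrite (nth_map 0%N) ?size_iota // nth_iota.
rewrite size_map size_iota; split=> //; split.
  by move=> l /nthE ->; case: eqP.
rewrite (bigD1 (Ordinal lt_j)) //= nthE // eqxx big1 ?addr0 // => l ne_lj.
by rewrite nthE // ifN ?mul0r //; apply: contra ne_lj => /eqP eq_lj; apply/eqP/val_inj.
Qed.

End IdealPowers.

Section MonomialPowers.
Variables (n : nat) (es : seq 'X_{1..n}).
Implicit Types (m : 'X_{1..n}).

Fixpoint mono_pow k m : bool :=
  if k is k'.+1 then has (fun e => (e <= m)%MM && mono_pow k' (m - e)) es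
  else true.

Lemma mono_pow_le k m m' : (m <= m')%MM -> mono_pow k m -> mono_pow k m'.
Proof.
elim: k m m' => [//|k IHk] m m' le_mm' /hasP [e es_e /andP [le_em mem]].
apply/hasP; exists e => //; rewrite (lepm_trans le_em le_mm') /=.
apply: IHk mem; apply/mnm_lepP => t; rewrite !mnmBE leq_sub2r //.
exact: mnm_lepP le_mm' t.
Qed.

Lemma mono_powSr k m e : e \in es -> mono_pow k m -> mono_pow k.+1 (m + e).
Proof. by move=> es_e mem; apply/hasP; exists e; rewrite ?lem_addl ?addmK. Qed.

Lemma mono_pow1 e : e \in es -> mono_pow 1 e.
Proof. by move=> es_e; rewrite -[e]add0m; apply: mono_powSr. Qed.

Lemma mono_powD k l m m' : mono_pow k m -> mono_pow l m' -> mono_pow (k + l) (m + m').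
Proof.
elim: k m => [|k IHk] m mem mem'.
  by apply: mono_pow_le mem'; apply: lem_addl.
have /hasP [e es_e /andP [le_em mem_e]] := mem.
have := mono_powSr es_e (IHk _ mem_e mem'); apply: mono_pow_le.
by apply/mnm_lepP => t; move/mnm_lepP/(_ t): le_em; rewrite !mnmDE mnmBE; lia.
Qed.

Lemma mono_pow_mulmn k e : e \in es -> mono_pow k (e *+ k)%MM.
Proof.
move=> es_e; elim: k => [//|k IHk].
by rewrite mulmSr; apply: mono_powSr.
Qed.

Lemma mono_pow_unit k m : 0%MM \in es -> mono_pow k m.
Proof.
move=> es_0; elim: k m => [//|k IHk] m; apply/hasP; exists 0%MM => //.
by apply/andP; split; [apply/mnm_lepP => t; rewrite mnm0E | apply: IHk].
Qed.

End MonomialPowers.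

Lemma mono_pow_subset n (es es' : seq 'X_{1..n}) k m :
  {subset es <= es'} -> mono_pow es k m -> mono_pow es' k m.
Proof.
move=> sub_es; elim: k m => [//|k IHk] m /hasP [e es_e /andP [le_em mem]].
by apply/hasP; exists e; [apply: sub_es | rewrite le_em; apply: IHk].
Qed.

(* Monomial form of the hypothesis L^2 = J L, i.e. of J being a reduction of L
   with reduction number at most one. *)
Definition mono_reduction n (js es : seq 'X_{1..n}) :=
  forall e1 e2, e1 \in es -> e2 \in es ->
  exists2 c, c \in js & exists2 e, e \in es & (c + e <= e1 + e2)%MM.

Lemma mono_pow_reduction n (js es : seq 'X_{1..n}) k m :
  mono_reduction js es -> mono_pow es k.+1 m ->
  exists2 m', mono_pow js k m' & exists2 e, e \in es & (m' + e <= m)%MM.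
Proof.
move=> red; elim: k m => [|k IHk] m /hasP [e1 es_e1 /andP [le_e1m mem]].
  by exists 0%MM => //; exists e1; rewrite ?add0m.
have [m' memJ [e2 es_e2 le_m']] := IHk _ mem.
have [c js_c [e es_e le_ce]] := red _ _ es_e2 es_e1.
exists (m' + c)%MM; first exact: mono_powSr.
exists e => //; apply/mnm_lepP => t.
move: (mnm_lepP le_e1m t) (mnm_lepP le_m' t) (mnm_lepP le_ce t).
rewrite !mnmDE mnmBE; lia.
Qed.

Lemma mono_pow3P n (c1 c2 c3 : 'X_{1..n}) k m :
  mono_pow [:: c1; c2; c3] k m <->
  exists al be ga, al + be + ga = k /\ (c1 *+ al + c2 *+ be + c3 *+ ga <= m)%MM.
Proof.
split.
  elim: k m => [|k IHk] m.
    by exists 0, 0, 0; split=> //; apply/mnm_lepP => t; rewrite !mnmDE !mulmnE !muln0.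
  move=> /hasP [c]; rewrite !inE => c_J /andP [le_cm /IHk [al [be [ga [<- le_sum]]]]].
  have le_coord t : (c t <= m t)%N /\
      (c1 t * al + c2 t * be + c3 t * ga <= m t - c t)%N.
    split; first exact: mnm_lepP le_cm t.
    by move: (mnm_lepP le_sum t); rewrite !mnmDE !mulmnE mnmBE.
  move: le_coord; case/or3P: c_J => /eqP -> le_coord;
    [exists al.+1, be, ga | exists al, be.+1, ga | exists al, be, ga.+1];
    (split; first lia); apply/mnm_lepP => t; have := le_coord t;
    rewrite !mnmDE !mulmnE; lia.
move=> [al [be [ga [<- le_sum]]]]; apply: mono_pow_le le_sum _.
by rewrite !mono_powD // mono_pow_mulmn // !inE eqxx ?orbT.
Qed.

Section MonomialIdeals.
Variables (R : comNzRingType) (n : nat).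
Local Open Scope ring_scope.
Implicit Types (p g : {mpoly R[n]}) (m u w : 'X_{1..n}) (es js : seq 'X_{1..n}).

Local Notation gens es := [seq ('X_[e] : {mpoly R[n]}) | e <- es].

Lemma msupp_in_prod (I : {mpoly R[n]} -> Prop) (P : pred 'X_{1..n}) js p m :
  (forall h, I h -> forall m', m' \in msupp h -> P m') ->
  in_prod I (gens js) p -> m \in msupp p ->
  exists2 c, c \in js & exists2 m', P m' & m = (m' + c)%MM.
Proof.
move=> suppI [hs [hs_sz [Ihs ->]]] /msupp_sum_le /flattenP [_ /mapP [j _ ->]].
have lt_j : (j < size js)%N by rewrite -(size_map (fun e => 'X_[e] : {mpoly R[n]})).
rewrite (nth_map 0%MM) // (perm_mem (msuppMX _ _)) => /mapP [m' supp_m' ->].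
exists (nth 0%MM js j); first exact: mem_nth.
by exists m'; [apply: suppI (Ihs _ (ltn_ord j)) _ supp_m' | rewrite addmC].
Qed.

Lemma in_pow_X es k m : mono_pow es k m -> in_pow (gens es) k 'X_[m].
Proof.
elim: k m => [//|k IHk] m /hasP [e es_e /andP [le_em mem]].
rewrite -(submK le_em) mpolyXD.
have -> : 'X_[e] = (gens es)`_(index e es) by rewrite (nth_map 0%MM) ?nth_index ?index_mem.
by apply: in_prod_nth; [apply: in_pow_closed | apply: IHk | rewrite size_map index_mem].
Qed.

Lemma in_pow_msupp es k p :
  (forall m, m \in msupp p -> mono_pow es k m) -> in_pow (gens es) k p.
Proof.
move=> supp_p; rewrite (mpolyE p) big_seq.
apply: (big_ind (in_pow (gens es) k)); [exact: in_pow0 | exact: in_powD |].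
by move=> m /supp_p /in_pow_X; rewrite -mul_mpolyC; apply: in_powMl.
Qed.

Lemma msupp_in_pow es k p :
  in_pow (gens es) k p -> forall m, m \in msupp p -> mono_pow es k m.
Proof.
elim: k p => [//|k IHk] p in_p m /(msupp_in_prod IHk in_p) [e es_e [m' mem ->]].
exact: mono_powSr.
Qed.

Lemma msupp_mulXD p w w' m : m \in msupp p ->
  (w + m)%MM \notin msupp (p * ('X_[w] + 'X_[w'])) ->
  exists2 m', m' \in msupp p & (w + m = w' + m')%MM.
Proof.
rewrite !mcoeff_msupp negbK mulrDr mcoeffD mcoeffMX addrC => p_m.
rewrite addr_eq0 => /eqP coef_eq; have : (p * 'X_[w'])@_(w + m) != 0.
  by rewrite coef_eq oppr_eq0.
by rewrite -mcoeff_msupp (perm_mem (msuppMX _ _)) => /mapP.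
Qed.

Lemma mono_reduction_of_sq es js :
  (forall p, in_pow (gens es) 2 p -> in_prod (in_pow (gens es) 1) (gens js) p) ->
  mono_reduction js es.
Proof.
move=> sqL e1 e2 es_e1 es_e2.
have L2_X : in_pow (gens es) 2 'X_[e1 + e2].
  exact/in_pow_X/(mono_powSr es_e2)/mono_pow1.
have [|c js_c [m' /hasP [e es_e /andP [le_em' _]] eq_m]] :=
  msupp_in_prod (@msupp_in_pow es 1) (sqL _ L2_X) (m := (e1 + e2)%MM).
  by rewrite msuppX mem_seq1.
exists c => //; exists e => //; rewrite eq_m addmC.
by apply/mnm_lepP => t; rewrite !mnmDE leq_add2r; apply: mnm_lepP le_em' t.
Qed.

(* No cancellation can occur at w + u in g (X^w + X^w'): the cancelling term
   would come from a monomial of g outside L^k with a larger t-th exponent. *)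
Lemma mono_pow_shift_argmax es k g w w' (t : 'I_n) u :
  w' \in es -> (w' t < w t)%N ->
  in_pow (gens es) k.+1 (g * ('X_[w] + 'X_[w'])) -> u \in msupp g ->
  {in [seq m <- msupp g | ~~ mono_pow es k m], forall m, (m t <= u t)%N} ->
  mono_pow es k.+1 (w + u).
Proof.
move=> es_w' lt_w't L_gw g_u u_max.
have [/(msupp_in_pow L_gw) // | /(msupp_mulXD g_u) [m' g_m' eq_wu]] :=
  boolP ((w + u)%MM \in msupp (g * ('X_[w] + 'X_[w']))).
have [mem | m'_notin] := boolP (mono_pow es k m').
  by rewrite eq_wu addmC; apply: mono_powSr.
have := u_max m'; rewrite mem_filter m'_notin g_m' => /(_ isT).
by move: (congr1 (fun m => m t) eq_wu); rewrite /= !mnmDE; lia.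
Qed.

End MonomialIdeals.

Lemma seq_argmax (T : eqType) (f : T -> nat) (s : seq T) x :
  x \in s -> exists2 y, y \in s & {in s, forall z, f z <= f y}.
Proof.
elim: s x => // y [|z s] IHs x _.
  by exists y => [|w]; [apply: mem_head | rewrite inE => /eqP ->].
have [w s_w w_max] := IHs z (mem_head z s).
have [le_yw | lt_wy] := leqP (f y) (f w).
  exists w => [|v]; first by rewrite inE s_w orbT.
  by rewrite inE => /predU1P [-> | /w_max].
exists y => [|v]; first exact: mem_head.
by rewrite inE => /predU1P [-> // | /w_max le_vw]; apply: leq_trans le_vw (ltnW lt_wy).
Qed.

Lemma ord2P (t : 'I_2) : t = ord0 \/ t = ord_max.
Proof. by case: t => [[|[|//]]] ?; [left | right]; apply: val_inj. Qed.

Lemma mnm2P (m m' : 'X_{1..2}) : m ord0 = m' ord0 -> m ord_max = m' ord_max -> m = m'.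
Proof. by move=> eq0 eq1; apply/mnmP => t; case: (ord2P t) => ->. Qed.

Lemma lem2E (m m' : 'X_{1..2}) :
  (m <= m')%MM = (m ord0 <= m' ord0) && (m ord_max <= m' ord_max).
Proof.
apply/mnm_lepP/andP => [le_mm' | [le0 le1] t]; first by split; apply: le_mm'.
by case: (ord2P t) => ->.
Qed.

Section LexSegment.
Variables (d : nat) (a : nat -> nat) (i : nat).
Hypotheses (a0 : a 0 = 0) (le_id : i <= d).
Implicit Types (m u v : 'X_{1..2}).

Definition lexexp j : 'X_{1..2} := [multinom if t == ord0 then d - j else a j | t < 2].
Definition lexexps := [seq lexexp j | j <- iota 0 d.+1].
Definition jexps := [:: lexexp 0; lexexp i; lexexp d].

Lemma lexexp_x j : lexexp j ord0 = d - j.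
Proof. by rewrite mnmE. Qed.

Lemma lexexp_y j : lexexp j ord_max = a j.
Proof. by rewrite mnmE. Qed.

Lemma mem_lexexps j : j <= d -> lexexp j \in lexexps.
Proof. by move=> le_jd; apply: map_f; rewrite mem_iota. Qed.

Lemma jexps_sub : {subset jexps <= lexexps}.
Proof. by move=> e; rewrite !inE => /or3P [] /eqP ->; apply: mem_lexexps. Qed.

Hypothesis red : mono_reduction jexps lexexps.

Lemma lex_pow_decomp k m : mono_pow lexexps k.+1 m ->
  exists al be ga j, [/\ al + be + ga = k, j <= d,
    al * d + be * (d - i) + (d - j) <= m ord0 & be * a i + ga * a d + a j <= m ord_max].
Proof.
move=> /(mono_pow_reduction red) [m' /mono_pow3P [al [be [ga [sum_k le_m']]]]].
case=> e /mapP [j]; rewrite mem_iota => /andP [_ lt_jd] -> le_m.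
move: le_m' le_m; rewrite !lem2E !mnmDE !mulmnE !lexexp_x !lexexp_y subn0 subnn a0.
by move=> /andP [? ?] /andP [? ?]; exists al, be, ga, j; split=> //; lia.
Qed.

Lemma lex_pow_of_J k m al be ga :
  al + be + ga = k -> al * d + be * (d - i) <= m ord0 ->
  be * a i + ga * a d <= m ord_max -> mono_pow lexexps k m.
Proof.
move=> sum_k le_x le_y; apply: (mono_pow_subset jexps_sub).
apply/mono_pow3P; exists al, be, ga; split=> //.
by rewrite lem2E !mnmDE !mulmnE !lexexp_x !lexexp_y subn0 subnn a0; apply/andP; lia.
Qed.

Lemma lex_powS_of_J k m al be ga j :
  al + be + ga = k -> j <= d -> al * d + be * (d - i) + (d - j) <= m ord0 ->
  be * a i + ga * a d + a j <= m ord_max -> mono_pow lexexps k.+1 m.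
Proof.
move=> sum_k le_jd le_x le_y.
have Jm : mono_pow lexexps k (m - lexexp j).
  by apply: (lex_pow_of_J sum_k); rewrite mnmBE ?lexexp_x ?lexexp_y; lia.
have le_jm : (lexexp j <= m)%MM.
  rewrite lem2E lexexp_x lexexp_y.
  by rewrite (leq_trans (leq_addl _ _) le_x) (leq_trans (leq_addl _ _) le_y).
by rewrite -(submK le_jm); apply: mono_powSr (mem_lexexps le_jd) Jm.
Qed.

Lemma lex_shift_x k u :
  mono_pow lexexps k.+2 (lexexp 0 + u) -> ~~ mono_pow lexexps k.+1 u ->
  exists2 b, u ord0 < b * (d - i) & b * a i <= u ord_max.
Proof.
move=> /lex_pow_decomp [al [be [ga [j [sum_k le_jd]]]]].
rewrite !mnmDE lexexp_x lexexp_y subn0 a0 => le_x le_y u_notin.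
case: al sum_k le_x => [|al] sum_k le_x; last first.
  by case/negP: u_notin; apply: (lex_powS_of_J (al := al) (be := be) (ga := ga) (j := j)); lia.
exists be; last lia.
rewrite ltnNge; apply: contra u_notin => le_bx.
by apply: (lex_pow_of_J (al := 0) (be := be) (ga := ga)); lia.
Qed.

Lemma lex_shift_y k v :
  mono_pow lexexps k.+2 (lexexp d + v) -> ~~ mono_pow lexexps k.+1 v ->
  exists2 b, b * (d - i) <= v ord0 & v ord_max < b * a i.
Proof.
move=> /lex_pow_decomp [al [be [ga [j [sum_k le_jd]]]]].
rewrite !mnmDE lexexp_x lexexp_y subnn => le_x le_y v_notin.
case: ga sum_k le_y => [|ga] sum_k le_y; last first.
  by case/negP: v_notin; apply: (lex_powS_of_J (al := al) (be := be) (ga := ga) (j := j)); lia.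
exists be; first lia.
rewrite ltnNge; apply: contra v_notin => le_by.
by apply: (lex_pow_of_J (al := al) (be := be) (ga := 0)); lia.
Qed.

Lemma lex_shifts_incompatible k u v :
  mono_pow lexexps k.+2 (lexexp 0 + u) -> mono_pow lexexps k.+2 (lexexp d + v) ->
  ~~ mono_pow lexexps k.+1 u -> ~~ mono_pow lexexps k.+1 v ->
  v ord0 <= u ord0 -> u ord_max <= v ord_max -> False.
Proof.
move=> Lu Lv u_notin v_notin le_vu_x le_uv_y.
have [b lt_ux le_uy] := lex_shift_x Lu u_notin.
have [b' le_vx lt_vy] := lex_shift_y Lv v_notin.
have lt_b'b : b' < b.
  by move: (leq_ltn_trans (leq_trans le_vx le_vu_x) lt_ux); rewrite ltn_mul2r => /andP [].
have := leq_mul (ltnW lt_b'b) (leqnn (a i)); lia.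
Qed.

End LexSegment.

Section LexIdeal.
Variables (R : comNzRingType) (d : nat) (a : nat -> nat) (i : nat).
Hypotheses (a0 : a 0 = 0) (le_id : i <= d).
Local Open Scope ring_scope.

Lemma lexgenE j : xv R ^+ (d - j) * yv R ^+ a j = 'X_[lexexp d a j].
Proof.
rewrite /xv /yv !mpolyXn -mpolyXD; congr 'X_[_].
by apply: mnm2P; rewrite mnmDE !mulmnE !mnm1E ?lexexp_x ?lexexp_y /= mul1n mul0n ?addn0.
Qed.

Lemma lexgensE : lexgens R d a = [seq 'X_[e] | e <- lexexps d a].
Proof. by rewrite /lexgens /lexexps -map_comp; apply: eq_map => j; apply: lexgenE. Qed.

Lemma xpow_lexgen : xv R ^+ d = 'X_[lexexp d a 0].
Proof. by rewrite -lexgenE subn0 a0 expr0 mulr1. Qed.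

Lemma ypow_lexgen : yv R ^+ a d = 'X_[lexexp d a d].
Proof. by rewrite -lexgenE subnn expr0 mul1r. Qed.

Lemma jgensE : [:: xv R ^+ d; xv R ^+ (d - i) * yv R ^+ a i; yv R ^+ a d] =
  [seq 'X_[e] | e <- jexps d a i].
Proof. by rewrite xpow_lexgen lexgenE ypow_lexgen. Qed.

Lemma lex_in_pow1_xy : in_pow (lexgens R d a) 1 (xv R ^+ d + yv R ^+ a d).
Proof.
rewrite xpow_lexgen ypow_lexgen lexgensE.
by apply: in_powD; apply/in_pow_X/mono_pow1/mem_lexexps.
Qed.

Lemma lex_in_pow_of_mulXD k (g : {mpoly R[2]}) :
  (0 < d -> 0 < a d)%N -> mono_reduction (jexps d a i) (lexexps d a) ->
  in_pow (lexgens R d a) k.+2 (g * (xv R ^+ d + yv R ^+ a d)) ->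
  in_pow (lexgens R d a) k.+1 g.
Proof.
rewrite xpow_lexgen ypow_lexgen lexgensE => a_pos red L_g.
apply: in_pow_msupp => m g_m; have [d0 | d_gt0] := posnP d.
  apply: mono_pow_unit; suff -> : 0%MM = lexexp d a 0 by apply: mem_lexexps.
  by apply: mnm2P; rewrite mnm0E ?lexexp_x ?lexexp_y ?d0 ?a0.
apply/negPn/negP => m_notin.
set S := [seq m <- msupp g | ~~ mono_pow (lexexps d a) k.+1 m].
have S_m : m \in S by rewrite mem_filter m_notin g_m.
have [u S_u u_max] := seq_argmax (fun m' : 'X_{1..2} => m' ord0) S_m.
have [v S_v v_max] := seq_argmax (fun m' : 'X_{1..2} => m' ord_max) S_m.
move: (S_u) (S_v); rewrite !mem_filter => /andP [u_notin g_u] /andP [v_notin g_v].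
have lt_x : (lexexp d a d ord0 < lexexp d a 0 ord0)%N by rewrite !lexexp_x subn0 subnn.
have lt_y : (lexexp d a 0 ord_max < lexexp d a d ord_max)%N by rewrite !lexexp_y a0 a_pos.
have Lu := mono_pow_shift_argmax (mem_lexexps a (leqnn d)) lt_x L_g g_u u_max.
rewrite addrC in L_g.
have Lv := mono_pow_shift_argmax (mem_lexexps a (leq0n d)) lt_y L_g g_v v_max.
exact: (lex_shifts_incompatible a0 le_id red Lu Lv u_notin v_notin
  (u_max v S_v) (v_max u S_u)).
Qed.

End LexIdeal.

Section GradedRing.
Variable R : comNzRingType.
Local Open Scope ring_scope.

Lemma nth_gr_mul_deg1 (f : R) g n : nth 0 (gr_mul [:: 0; f] g) n.+1 = f * nth 0 g n.
Proof.
rewrite /gr_mul; have [lt_n | le_n] := ltnP n.+1 (size [:: 0; f] + size g).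
  rewrite nth_mkseq // !big_ord_recl big1 => [|j _] /=; last by rewrite nth_nil mul0r.
  by rewrite mul0r add0r addr0 /bump /= subn1.
by rewrite !nth_default ?mulr0 ?size_mkseq //; move: le_n => /=; lia.
Qed.

Lemma gr_depth_pos_of_regular (ms gs : seq R) f : in_pow gs 1 f ->
  (forall n g, in_pow gs n.+2 (f * g) -> in_pow gs n.+1 g) -> gr_depth_pos ms gs.
Proof.
move=> L_f f_reg; exists [:: 0; f]; split; [|split].
- by case=> [|[|n]] //; rewrite nth_default //; apply: in_pow0.
- exact: in_pow0.
- by move=> g _ g0 n; have := g0 n.+1; rewrite nth_gr_mul_deg1 => /f_reg.
Qed.

End GradedRing.

Unset Implicit Arguments.
Local Open Scope ring_scope.

Theorem proposition4p1 (k : closedFieldType) (hk : [pchar k] =i pred0)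
  (d : nat) (a : nat -> nat) (ha0 : a 0%N = 0%N)
  (hinc : forall j, (j < d)%N -> (a j < a j.+1)%N)
  (i : nat) (hi : (i <= d)%N)
  (hL2 : forall p : {mpoly k[2]},
     in_pow (lexgens k d a) 2 p <->
     in_prod (in_pow (lexgens k d a) 1)
       [:: xv k ^+ d; xv k ^+ (d - i) * yv k ^+ a i; yv k ^+ a d] p) :
  gr_depth_pos [:: xv k; yv k] (lexgens k d a).
Proof.
have red : mono_reduction (jexps d a i) (lexexps d a).
  apply: (mono_reduction_of_sq (R := k)) => p.
  by rewrite -lexgensE -jgensE //; apply: (proj1 (hL2 p)).
have a_pos : (0 < d -> 0 < a d)%N.
  move=> d_gt0; rewrite -ha0.
  apply: (homo_ltn_in (D := [pred j | j <= d]%N) ltn_trans); rewrite ?inE //=.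
  - by move=> j l _ le_ld m /andP [_ lt_ml]; rewrite inE (leq_trans (ltnW lt_ml)).
  - by move=> j _ /hinc.
apply: (@gr_depth_pos_of_regular _ _ _ (xv k ^+ d + yv k ^+ a d)).
  exact: lex_in_pow1_xy.
by move=> n g; rewrite mulrC; apply: (lex_in_pow_of_mulXD ha0 hi a_pos red).
Qed.
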